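(* Let $\mu>1$ and $\beta>0$. If $\tilde f\in\tilde{\mathcal C}_{1,\beta}(V)$ is such that $\tilde M=\tilde\delta\tilde f$ satisfies $\mathcal N[\tilde M;\tilde{\mathcal C}^\mu_{2,\beta}]<\infty$, then $\tilde M=0$. In other words, $\mathcal Z\tilde{\mathcal C}^\mu_{2,\beta}=\{0\}$.
   Context: Fix a measurable $\hat\phi:(0,\infty)\to\mathbb R$, a separable Banach space $V$ and an interval $[\ell_1,\ell_2]$. $\mathcal L_\beta(V)$ is the space of measurable $g:[0,\infty)\to V$ with $\mathcal N[g;\mathcal L_\beta]=\int_0^\infty|\hat\phi(\xi)|(1+\xi^\beta)\|g(\xi)\|_Vd\xi<\infty$. $\tilde{\mathcal C}_{1,\beta}(V)$ is the space of continuous maps $[\ell_1,\ell_2]\to\mathcal L_\beta(V)$, $\tilde{\mathcal C}_{2,\beta}(V)$ the space of continuous maps from $\{(t,s):\ell_2\ge t\ge s\ge\ell_1\}$ to $\mathcal L_\beta(V)$. $(\tilde\delta\tilde f)_{ts}(\xi)=\tilde f_t(\xi)-e^{-\xi(t-s)}\tilde f_s(\xi)$. $\mathcal N[\tilde M;\tilde{\mathcal C}^\mu_{2,\beta}]=\sup_{s<t}\mathcal N[\tilde M_{ts};\mathcal L_\beta]/|t-s|^\mu$, and $\mathcal Z\tilde{\mathcal C}^\mu_{2,\beta}$ is the set of elements of $\tilde{\mathcal C}_{2,\beta}$ of finite such norm lying in the image of $\tilde\delta$. *)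

From HB Require Import structures.
From mathcomp Require Import all_boot all_order all_algebra.
From mathcomp Require Import all_classical all_reals all_analysis.
Set Implicit Arguments. Unset Strict Implicit. Unset Printing Implicit Defensive.
Import Order.TTheory GRing.Theory Num.Theory.
Import numFieldNormedType.Exports.
Local Open Scope classical_set_scope.
Local Open Scope ring_scope.

Definition separable (R : realType) (V : normedModType R) : Prop :=
  exists S : set V, countable S /\ closure S = [set: V].

Definition vmeasurable_fun (R : realType) (V : normedModType R)
    (D : set R) (g : R -> V) : Prop :=
  forall O : set V, open O -> measurable (D `&` g @^-1` O).

Definition NL (R : realType) (V : normedModType R) (phi : R -> R) (beta : R)
    (g : R -> V) : \bar R :=
  (\int[@lebesgue_measure R]_(x in `]0%R, +oo[)
     ((`|phi x| * (1 + x `^ beta) * `|g x|)%:E))%E.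

Definition inL (R : realType) (V : normedModType R) (phi : R -> R) (beta : R)
    (g : R -> V) : Prop :=
  vmeasurable_fun `[0%R, +oo[ g /\ (NL phi beta g < +oo)%E.

(* \tilde C_{1,beta}(V): continuous maps [l1,l2] -> L_beta(V) *)
Definition inC1 (R : realType) (V : normedModType R) (phi : R -> R) (beta : R)
    (l1 l2 : R) (f : R -> R -> V) : Prop :=
  (forall t, l1 <= t <= l2 -> inL phi beta (f t)) /\
  (forall t, l1 <= t <= l2 -> forall eps : R, 0 < eps ->
     exists2 delta : R, 0 < delta &
       forall t', l1 <= t' <= l2 -> `|t' - t| < delta ->
         (NL phi beta (fun xi => (f t' xi - f t xi)%R) < eps%:E)%E).

Definition tdelta (R : realType) (V : normedModType R) (f : R -> R -> V)
    (t s : R) : R -> V :=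
  fun xi => f t xi - expR (- (xi * (t - s))) *: f s xi.

Definition holder2_finite (R : realType) (V : normedModType R) (phi : R -> R)
    (beta mu l1 l2 : R) (M : R -> R -> R -> V) : Prop :=
  exists C : R, forall s t, l1 <= s -> s < t -> t <= l2 ->
    (NL phi beta (M t s) <= (C * (t - s) `^ mu)%:E)%E.

(* Chen's relation [M_tu = M_ts + e^{-xi(t-s)} M_su] together with
   [e^{-xi(t-s)} <= 1] gives [N[M_tu] <= N[M_ts] + N[M_su]] for [s <= t].
   Cutting [[s, t]] into [n] equal pieces and using the Hölder bound gives
   [N[M_ts] <= n C ((t-s)/n)^mu = C (t-s) ((t-s)/n)^(mu-1)], which tends to [0]
   with [1/n] because [mu > 1].
   Adding the integrals needs [xi |-> ||M_ts(xi)||] to be measurable: in a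
   separable space, [||a - b||] is the infimum of [||e_n - a|| + ||e_n - b||]
   over a dense sequence [e], a countable infimum of measurable functions. *)

From HB Require Import structures.
From mathcomp Require Import all_boot all_order all_algebra.
From mathcomp Require Import all_classical all_reals all_analysis.
From mathcomp Require Import measurable_realfun ring lra.
Set Implicit Arguments.
Unset Strict Implicit.
Unset Printing Implicit Defensive.

Import Order.TTheory GRing.Theory Num.Theory.
Import numFieldNormedType.Exports.
Local Open Scope classical_set_scope.
Local Open Scope ring_scope.

Section Measurability.
Variables (R : realType) (V : normedModType R).

Lemma separable_dense_seq : separable V -> exists e : nat -> V,
  forall v (eps : R), 0 < eps -> exists n, `|v - e n| < eps.
Proof.
move=> [S [cS clS]].
have [g gS] : exists g : nat -> V, set_surj setT S g by apply/pcard_surjP.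
exists g => v eps eps0.
have : closure S v by rewrite clS.
move=> /(_ (ball v eps) (nbhsx_ballx _ _ eps0)) [w [Sw vw]].
have [n _ gn] := gS w Sw.
by exists n; rewrite gn; move: vw; rewrite -ball_normE.
Qed.

Lemma vmeasurable_funS (D D' : set R) (a : R -> V) :
  measurable D' -> D' `<=` D -> vmeasurable_fun D a -> vmeasurable_fun D' a.
Proof.
move=> mD' D'D ma O oO.
by rewrite -(setIidl D'D) -setIA; apply: measurableI => //; exact: ma.
Qed.

Lemma continuous_normBZ (d v : V) : continuous (fun r : R => `|d - r *: v|).
Proof.
move=> r; apply: (@continuous_comp _ _ _ (fun r : R => d - r *: v) (@Num.norm _ V)).
  by apply: cvgB; [exact: cvg_cst | apply: cvgZl; exact: cvg_id].
exact: norm_continuous.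
Qed.

Variable D : set R.
Hypothesis mD : measurable D.

Lemma measurable_fun_inf_seq (g : R -> R) (h : nat -> R -> R) :
  (forall n, measurable_fun D (h n)) -> (forall n x, D x -> g x <= h n x) ->
  (forall x, D x -> forall e, 0 < e -> exists n, h n x < g x + e) ->
  measurable_fun D g.
Proof.
move=> mh gh hg.
apply: (measurability _ (measurable_realfun.RGenInftyO.measurableE R)) => //.
move=> _ [_ [r ->] <-].
suff -> : D `&` g @^-1` `]-oo, r[ = \bigcup_n (D `&` h n @^-1` `]-oo, r[).
  by apply: bigcupT_measurable => n; apply: mh => //; exact: measurable_itv.
apply/seteqP; split => x /=.
- move=> [Dx]; rewrite in_itv /= => gr.
  have /(hg x Dx) [n hn] : 0 < r - g x by rewrite subr_gt0.
  by exists n => //; split => //; rewrite /= in_itv /= -(subrKC (g x) r).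
- move=> [n _ [Dx]]; rewrite /= !in_itv /= => hr; split => //.
  exact: le_lt_trans (gh n x Dx) hr.
Qed.

Lemma measurable_fun_normB (v : V) (a : R -> V) :
  vmeasurable_fun D a -> measurable_fun D (fun x => `|v - a x|).
Proof.
move=> ma.
apply: (measurability _ (measurable_realfun.RGenInftyO.measurableE R)) => //.
move=> _ [_ [r ->] <-].
suff -> : D `&` (fun x => `|v - a x|) @^-1` `]-oo, r[ = D `&` a @^-1` ball v r.
  by apply: ma; exact: ball_open.
by apply/seteqP; split => x /= [Dx]; rewrite ?in_itv /= -?ball_normE.
Qed.

Hypothesis sepV : separable V.

Lemma measurable_fun_cst_normBZ (d : V) (c : R -> R) (b : R -> V) :
  measurable_fun D c -> vmeasurable_fun D b ->
  measurable_fun D (fun x => `|d - c x *: b x|).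
Proof.
move=> mc mb; have [e dense_e] := separable_dense_seq sepV.
have split_norm v w x : `|d - c x *: v| <= `|d - c x *: w| + `|c x| * `|w - v|.
  have -> : d - c x *: v = (d - c x *: w) + c x *: (w - v).
    by rewrite scalerBr addrA subrK.
  by rewrite -normrZ; apply: ler_normD.
apply: (@measurable_fun_inf_seq _
  (fun n x => `|d - c x *: e n| + `|c x| * `|e n - b x|)).
- move=> n; apply: measurable_funD; last first.
    apply: measurable_funM; last exact: measurable_fun_normB.
    exact: (measurableT_comp (@normr_measurable R setT) mc).
  exact: measurableT_comp
    (continuous_measurable_fun (continuous_normBZ (d := d) (v := e n))) mc.
- by move=> n x _; exact: split_norm.
- move=> x _ eps eps0.
  have cx0 : 0 < 2 * (`|c x| + 1) by rewrite mulr_gt0 // ltr_wpDl.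
  have [n bn] := dense_e (b x) (eps / (2 * (`|c x| + 1))) (divr_gt0 eps0 cx0).
  exists n; have := split_norm (e n) (b x) x.
  rewrite (distrC (e n)); move: bn; rewrite ltr_pdivlMr // => bn.
  have cx_ge0 := normr_ge0 (c x); have bn_ge0 := normr_ge0 (b x - e n).
  have : `|c x| * `|b x - e n| * 2 < eps by nra.
  lra.
Qed.

Lemma measurable_fun_normB_dense (a b : R -> V) :
  (forall d, measurable_fun D (fun x => `|d - a x|)) ->
  (forall d, measurable_fun D (fun x => `|d - b x|)) ->
  measurable_fun D (fun x => `|a x - b x|).
Proof.
move=> ma mb; have [e dense_e] := separable_dense_seq sepV.
have split_norm v x : `|a x - b x| <= `|v - a x| + `|v - b x|.
  by rewrite (distrC v); exact: ler_distD.
apply: (@measurable_fun_inf_seq _ (fun n x => `|e n - a x| + `|e n - b x|)).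
- by move=> n; apply: measurable_funD.
- by move=> n x _; exact: split_norm.
- move=> x _ eps eps0.
  have [n an] := dense_e (a x) (eps / 2) (divr_gt0 eps0 (ltr0Sn _ 1)).
  exists n; have := ler_distD (a x) (e n) (b x).
  rewrite (distrC (e n) (a x)); lra.
Qed.

Lemma measurable_fun_normBZ (a b : R -> V) (c : R -> R) :
  vmeasurable_fun D a -> vmeasurable_fun D b -> measurable_fun D c ->
  measurable_fun D (fun x => `|a x - c x *: b x|).
Proof.
move=> ma mb mc; apply: measurable_fun_normB_dense => d.
  exact: measurable_fun_normB.
exact: measurable_fun_cst_normBZ.
Qed.

End Measurability.

Section IncrementNorm.
Variables (R : realType) (V : normedModType R) (phi : R -> R) (beta : R).

Lemma NL_ge0 (g : R -> V) : (0 <= NL phi beta g)%E.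
Proof.
apply: integral_ge0 => x _; rewrite lee_fin; apply: mulr_ge0 => //.
by apply: mulr_ge0 => //; apply: addr_ge0 => //; exact: powR_ge0.
Qed.

Lemma NL_tdeltaxx (f : R -> R -> V) t : NL phi beta (tdelta f t t) = 0%E.
Proof.
rewrite /NL (_ : (fun x => _) = cst 0%E) ?integral0 //.
by apply/funext => x; rewrite /tdelta subrr mulr0 oppr0 expR0 scale1r subrr normr0 mulr0.
Qed.

Lemma tdelta_chasles (f : R -> R -> V) t s u x :
  tdelta f t u x = tdelta f t s x + expR (- (x * (t - s))) *: tdelta f s u x.
Proof.
rewrite /tdelta scalerBr scalerA -expRD addrA subrK.
by congr (_ - expR _ *: _); ring.
Qed.

Lemma norm_tdelta_le (f : R -> R -> V) t s u x : s <= t -> 0 <= x ->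
  `|tdelta f t u x| <= `|tdelta f t s x| + `|tdelta f s u x|.
Proof.
move=> st x0; rewrite (tdelta_chasles f t s u x).
apply: le_trans (ler_normD _ _) _; rewrite lerD2l normrZ ger0_norm ?expR_ge0 //.
apply: ler_piMl => //; rewrite expR_le1 oppr_le0.
by apply: mulr_ge0; rewrite ?subr_ge0.
Qed.

Hypotheses (mphi : measurable_fun (`]0%R, +oo[ : set R) phi) (sepV : separable V).

Lemma measurable_NL_integrand (f : R -> R -> V) t s :
  inL phi beta (f t) -> inL phi beta (f s) ->
  measurable_fun (`]0%R, +oo[ : set R)
    (fun x => (`|phi x| * (1 + x `^ beta) * `|tdelta f t s x|)%:E).
Proof.
move=> [mft _] [mfs _]; apply/measurable_EFinP.
have sub_itv : (`]0%R, +oo[ : set R) `<=` `[0%R, +oo[.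
  by move=> x; rewrite /= !in_itv /= !andbT; exact: ltW.
apply: measurable_funM; first apply: measurable_funM.
- exact: (measurableT_comp (@normr_measurable R setT) mphi).
- by apply: measurable_funD => //; apply: measurable_funTS; exact: measurable_powR.
- apply: measurable_fun_normBZ => //.
  + exact: vmeasurable_funS (measurable_itv _) sub_itv mft.
  + exact: vmeasurable_funS (measurable_itv _) sub_itv mfs.
  + apply: measurableT_comp => //; apply: measurableT_comp => //.
    exact: mulrr_measurable.
Qed.

Lemma NL_tdelta_le (f : R -> R -> V) t s u :
  inL phi beta (f t) -> inL phi beta (f s) -> inL phi beta (f u) -> s <= t ->
  (NL phi beta (tdelta f t u) <= NL phi beta (tdelta f t s) + NL phi beta (tdelta f s u))%E.
Proof.
move=> Lt Ls Lu st.
have w_ge0 x : 0 <= `|phi x| * (1 + x `^ beta).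
  by apply: mulr_ge0 => //; apply: addr_ge0 => //; exact: powR_ge0.
have integrand_ge0 a b x :
  (0 <= (`|phi x| * (1 + x `^ beta) * `|tdelta f a b x|)%:E)%E.
  by rewrite lee_fin mulr_ge0.
rewrite /NL -ge0_integralD //; try exact: measurable_NL_integrand.
apply: ge0_le_integral => //; try exact: measurable_NL_integrand.
  by apply: emeasurable_funD; exact: measurable_NL_integrand.
move=> x; rewrite /= in_itv /= andbT => x0.
rewrite -EFinD lee_fin -mulrDr ler_wpM2l //.
exact: norm_tdelta_le (ltW x0).
Qed.

Lemma NL_tdelta_chain (f : R -> R -> V) (p : nat -> R) n :
  (forall k, (k <= n)%N -> inL phi beta (f (p k))) ->
  (forall k, (k < n)%N -> p k <= p k.+1) ->
  (NL phi beta (tdelta f (p n) (p 0%N)) <=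
     \sum_(k < n) NL phi beta (tdelta f (p k.+1) (p k)))%E.
Proof.
elim: n => [|n IH] Lp p_incr; first by rewrite NL_tdeltaxx big_ord0.
rewrite big_ord_recr /= addeC.
apply: le_trans (NL_tdelta_le _ _ _ (p_incr n _)) _ => //; try exact: Lp.
apply: leeD => //; apply: IH => k kn.
- exact/Lp/ltnW.
- exact/p_incr/ltnW.
Qed.

Lemma NL_tdelta_le_partition (f : R -> R -> V) (l1 l2 mu C s t : R) n :
  (forall t, l1 <= t <= l2 -> inL phi beta (f t)) ->
  (forall s t, l1 <= s -> s < t -> t <= l2 ->
     (NL phi beta (tdelta f t s) <= (C * (t - s) `^ mu)%:E)%E) ->
  l1 <= s -> s < t -> t <= l2 -> (0 < n)%N ->
  (NL phi beta (tdelta f t s) <= (n%:R * (C * ((t - s) / n%:R) `^ mu))%:E)%E.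
Proof.
move=> Lf holder ls st tl n0.
have n0' : (0 < n%:R :> R) by rewrite ltr0n.
pose q := (t - s) / n%:R; pose p k := s + k%:R * q.
have q0 : 0 < q by rewrite divr_gt0 // subr_gt0.
have p0 : p 0%N = s by rewrite /p mul0r addr0.
have pn : p n = t by rewrite /p mulrC divfK ?gt_eqF // subrKC.
have pS k : p k.+1 = p k + q by rewrite /p -addn1 natrD; ring.
have p_in k : (k <= n)%N -> l1 <= p k <= l2.
  move=> kn; have : k%:R * q <= n%:R * q by rewrite ler_wpM2r ?ler_nat ?ltW.
  rewrite [n%:R * q]mulrC divfK ?gt_eqF // => kq.
  have := mulr_ge0 (ler0n R k) (ltW q0).
  by rewrite /p => kq0; apply/andP; split; lra.
have p_incr k : (k < n)%N -> p k <= p k.+1 by rewrite pS lerDl ltW.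
have := @NL_tdelta_chain f p n (fun k kn => Lf _ (p_in k kn)) p_incr.
rewrite p0 pn => /le_trans; apply.
rewrite -/q mulr_natl -[n in _ *+ n]card_ord -sumr_const -sumEFin.
apply: lee_sum => k _.
have -> : q = p k.+1 - p k by rewrite pS addrAC subrr add0r.
apply: holder; last first.
- by have /andP[] := p_in k.+1 (ltn_ord k).
- by rewrite pS ltrDl.
- by have /andP[] := p_in k (ltnW (ltn_ord k)).
Qed.

End IncrementNorm.

Section UniformPartition.
Variable R : realType.

Lemma exists_powR_div_le (h a eps : R) : 0 < h -> 0 < a -> 0 < eps ->
  exists n : nat, (0 < n)%N /\ (h / n%:R) `^ a <= eps.
Proof.
move=> h0 a0 eps0.
pose del := eps `^ a^-1.
have del0 : 0 < del by rewrite powR_gt0.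
have delE : del `^ a = eps by rewrite -powRrM mulVf ?gt_eqF // powRr1 ?ltW.
pose n := (Num.bound (h / del)).+1.
have n0 : (0 < n%:R :> R) by rewrite ltr0n.
have hn_del : h / n%:R <= del.
  rewrite ler_pdivrMr // mulrC -ler_pdivrMr //; apply/ltW.
  apply: lt_le_trans (archi_boundP _) _; first by rewrite divr_ge0 ?ltW.
  by rewrite ler_nat.
exists n; split => //; rewrite -delE.
by apply: ge0_ler_powR => //; rewrite ?nnegrE ltW ?divr_gt0.
Qed.

Lemma exists_partition_holder_le (C h mu eps : R) : 0 < h -> 1 < mu -> 0 < eps ->
  exists n : nat, (0 < n)%N /\ n%:R * (C * (h / n%:R) `^ mu) <= eps.
Proof.
move=> h0 mu1 eps0.
have K0 : 0 < `|C| * h + 1 by rewrite ltr_wpDl // mulr_ge0 // ltW.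
have mu1_gt0 : 0 < mu - 1 by rewrite subr_gt0.
have [n [n0 hn]] := exists_powR_div_le h0 mu1_gt0 (divr_gt0 eps0 K0).
exists n; split => //.
have hn0 : 0 < h / n%:R by rewrite divr_gt0 ?ltr0n.
have -> : n%:R * (C * (h / n%:R) `^ mu) = C * h * (h / n%:R) `^ (mu - 1).
  rewrite -[in LHS](subrKC 1 mu) (@powRD _ _ 1) ?(gt_eqF hn0) ?implybT //.
  rewrite powRr1 ?ltW //.
  by field; rewrite gt_eqF ?ltr0n.
move: hn; rewrite ler_pdivlMr //.
have := powR_ge0 (h / n%:R) (mu - 1); have := ler_norm (C * h).
set x := _ `^ _; rewrite normrM (gtr0_norm h0); nra.
Qed.

End UniformPartition.

Theorem lemma3p4 (R : realType) (V : completeNormedModType R)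
  (phi : R -> R) (l1 l2 mu beta : R) (f : R -> R -> V) :
  measurable_fun (`]0%R, +oo[ : set R) phi ->
  separable V ->
  1 < mu -> 0 < beta ->
  inC1 phi beta l1 l2 f ->
  holder2_finite phi beta mu l1 l2 (tdelta f) ->
  forall s t, l1 <= s -> s <= t -> t <= l2 ->
    NL phi beta (tdelta f t s) = 0%E.
Proof.
move=> mphi sepV mu1 _ [Lf _] [C holder] s t ls st tl.
have [<-|neq_st] := eqVneq s t; first exact: NL_tdeltaxx.
have lt_st : s < t by rewrite lt_neqAle neq_st.
apply/eqP; rewrite eq_le NL_ge0 andbT; apply/lee_addgt0Pr => eps eps0.
have st_gt0 : 0 < t - s by rewrite subr_gt0.
have [n [n0 small]] := exists_partition_holder_le C st_gt0 mu1 eps0.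
rewrite add0e; apply: le_trans (NL_tdelta_le_partition mphi sepV Lf holder ls lt_st tl n0) _.
by rewrite lee_fin.
Qed.
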